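(* Let $k\ge 2$. For every proper coloring of the gadget $A(k)$ using at most $2k-2$ colors, the gadget is exactly one of row-colorful and column-colorful (i.e., it is row-colorful or column-colorful, but not both).
   Context: The gadget $A(k)$ is the graph with node set $[k]\times[k]$ in which $(i,j)$ and $(i',j')$ are adjacent iff $i\ne i'$ and $j\ne j'$. For $i\in[k]$, the $i$-th row is $\{(i,j):j\in[k]\}$; for $j\in[k]$, the $j$-th column is $\{(i,j):i\in[k]\}$. Given a proper coloring of $A(k)$, a row (resp. column) is colorful if its $k$ nodes receive pairwise distinct colors; the gadget is row-colorful if it has a colorful row and column-colorful if it has a colorful column. *)

From mathcomp Require Import all_boot.
Set Implicit Arguments. Unset Strict Implicit. Unset Printing Implicit Defensive.

Definition gadget_adj (k : nat) : rel ('I_k * 'I_k) :=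
  fun u v => (u.1 != v.1) && (u.2 != v.2).

Definition proper_coloring (k m : nat) (c : 'I_k * 'I_k -> 'I_m) : Prop :=
  forall u v, gadget_adj u v -> c u != c v.

Definition colorful_row (k m : nat) (c : 'I_k * 'I_k -> 'I_m) (i : 'I_k) : bool :=
  injectiveb (fun j : 'I_k => c (i, j)).

Definition colorful_col (k m : nat) (c : 'I_k * 'I_k -> 'I_m) (j : 'I_k) : bool :=
  injectiveb (fun i : 'I_k => c (i, j)).

Definition row_colorful (k m : nat) (c : 'I_k * 'I_k -> 'I_m) : bool :=
  [exists i, colorful_row c i].

Definition column_colorful (k m : nat) (c : 'I_k * 'I_k -> 'I_m) : bool :=
  [exists j, colorful_col c j].

From mathcomp Require Import all_boot.
From mathcomp Require Import zify.

(* In a proper coloring, a color used twice in row i cannot occur outside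
   row i: any other cell differs in its column from one of the two
   occurrences and is therefore adjacent to it.  Hence, if no row and no
   column were colorful, choosing a repeated color in each row and in each
   column would give 2k distinct colors.  Conversely, a colorful row and a
   colorful column carry k colors each and share at most the color of their
   common cell, so they need 2k - 1 colors. *)

Section Gadget.

Context {k m : nat}.

Implicit Types (c : 'I_k * 'I_k -> 'I_m) (a : 'I_m).

Definition transpose_coloring c : 'I_k * 'I_k -> 'I_m := fun u => c (u.2, u.1).

Definition repeated_in_row c (i : 'I_k) a : bool :=
  [exists x, exists x', [&& x != x', c (i, x) == a & c (i, x') == a]].

Lemma proper_coloringP {c} {i i' j j' : 'I_k} :
  proper_coloring c -> i != i' -> j != j' -> c (i, j) != c (i', j').
Proof. by move=> Hc ii' jj'; apply: Hc; rewrite /gadget_adj /= ii' jj'. Qed.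

Lemma proper_coloring_transpose {c} :
  proper_coloring c -> proper_coloring (transpose_coloring c).
Proof.
by move=> Hc u v; rewrite /gadget_adj andbC; apply: (Hc (u.2, u.1) (v.2, v.1)).
Qed.

Lemma uncolorful_row_repeated {c i} :
  ~~ colorful_row c i -> exists a, repeated_in_row c i a.
Proof.
case/injectivePn=> x [x' xx' E]; exists (c (i, x)).
by apply/existsP; exists x; apply/existsP; exists x'; rewrite xx' E eqxx.
Qed.

Lemma repeated_in_row_confined {c i a} {y z : 'I_k} :
  proper_coloring c -> repeated_in_row c i a -> c (y, z) = a -> y = i.
Proof.
move=> Hc /existsP[x /existsP[x' /and3P[xx' /eqP Ex /eqP Ex']]] Eyz.
apply/eqP; apply/negPn/negP=> yi.
have [zx | zx] := eqVneq z x.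
  have zx' : z != x' by rewrite zx.
  by move: (proper_coloringP Hc yi zx'); rewrite Eyz Ex' eqxx.
by move: (proper_coloringP Hc yi zx); rewrite Eyz Ex eqxx.
Qed.

Lemma repeated_in_row_inj {c i i' a} :
  proper_coloring c -> repeated_in_row c i a -> repeated_in_row c i' a -> i' = i.
Proof.
move=> Hc Hi /existsP[x /existsP[_ /and3P[_ /eqP Ex _]]].
exact: repeated_in_row_confined Hi Ex.
Qed.

Lemma repeated_in_row_not_in_col {c i a} j : proper_coloring c ->
  repeated_in_row c i a -> ~~ repeated_in_row (transpose_coloring c) j a.
Proof.
move=> Hc Hi; apply/negP=> /existsP[y /existsP[y' /and3P[yy' /eqP Ey /eqP Ey']]].
rewrite /transpose_coloring /= in Ey Ey'.
move: yy'; rewrite (repeated_in_row_confined Hc Hi Ey).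
by rewrite (repeated_in_row_confined Hc Hi Ey') eqxx.
Qed.

Lemma row_col_uncolorful_card {c} : proper_coloring c ->
  ~~ row_colorful c -> ~~ column_colorful c -> 2 * k <= m.
Proof.
move=> Hc /existsPn noRow /existsPn noCol.
have [r Hr] : exists r : 'I_k -> 'I_m, forall i, repeated_in_row c i (r i).
  exact: fin_all_exists (fun i => uncolorful_row_repeated (noRow i)).
have [s Hs] : exists s : 'I_k -> 'I_m,
    forall j, repeated_in_row (transpose_coloring c) j (s j).
  exact: fin_all_exists (fun j => uncolorful_row_repeated (noCol j)).
have HcT := proper_coloring_transpose Hc.
pose f (u : 'I_k + 'I_k) := match u with inl i => r i | inr j => s j end.
have f_inj : injective f.
  case=> [i|j] [i'|j'] /= E.
  - by move: (Hr i'); rewrite -E => /(repeated_in_row_inj Hc (Hr i)) ->.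
  - by move: (repeated_in_row_not_in_col j' Hc (Hr i)); rewrite E Hs.
  - by move: (repeated_in_row_not_in_col j Hc (Hr i')); rewrite -E Hs.
  - by move: (Hs j'); rewrite -E => /(repeated_in_row_inj HcT (Hs j)) ->.
by move: (leq_card f f_inj); rewrite card_sum !card_ord addnn -mul2n.
Qed.

Lemma row_col_colorful_card {c i j} : proper_coloring c ->
  colorful_row c i -> colorful_col c j -> 2 * k - 1 <= m.
Proof.
move=> Hc /injectiveP rowInj /injectiveP colInj.
set A := [set c (i, x) | x : 'I_k].
set B := [set c (y, j) | y : 'I_k].
have cardA : #|A| = k by rewrite card_imset // card_ord.
have cardB : #|B| = k by rewrite card_imset // card_ord.
have cardAB : #|A :&: B| <= 1.
  rewrite -(cards1 (c (i, j))); apply: subset_leq_card.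
  apply/subsetP=> _ /setIP[/imsetP[x _ ->] /imsetP[y _ E]].
  rewrite inE; apply/eqP.
  have [-> // | xj] := eqVneq x j.
  have [yi | iy] := eqVneq i y; first by move: E; rewrite -yi => /rowInj ->.
  by move: (proper_coloringP Hc iy xj); rewrite E eqxx.
have := max_card (A :|: B); rewrite cardsU cardA cardB card_ord; lia.
Qed.

End Gadget.

Theorem mainTheorem14 (k m : nat) (c : 'I_k * 'I_k -> 'I_m) :
  2 <= k -> m <= 2 * k - 2 -> proper_coloring c ->
  (row_colorful c || column_colorful c) && ~~ (row_colorful c && column_colorful c).
Proof.
move=> k_ge2 m_le Hc; apply/andP; split.
  apply/negPn/negP; rewrite negb_or => /andP[noRow noCol].
  by move: (row_col_uncolorful_card Hc noRow noCol); lia.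
apply/negP=> /andP[/existsP[i Hi] /existsP[j Hj]].
by move: (row_col_colorful_card Hc Hi Hj); lia.
Qed.
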